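(* There exist continuous functions $f_1,f_2,f_3,f_4:\mathrm{SO}(3)\to S^3$ such that for every rotation $R\in\mathrm{SO}(3)$, $\mathbf{R}_Q(f_i(R))=R$ for some $i\in\{1,2,3,4\}$.
   Context: $S^3$ is the set of unit quaternions, identifying $w+x\mathbf{i}+y\mathbf{j}+z\mathbf{k}$ with $(w,x,y,z)$. $\mathbf{R}_Q:S^3\to\mathrm{SO}(3)$ is the standard conversion $$\mathbf{R}_Q(w,x,y,z)=\begin{bmatrix}1-2y^2-2z^2 & 2(xy-zw) & 2(xz+yw)\\ 2(xy+zw) & 1-2x^2-2z^2 & 2(yz-xw)\\ 2(xz-yw) & 2(yz+xw) & 1-2x^2-2y^2\end{bmatrix}.$$ *)

From HB Require Import structures.
From mathcomp Require Import all_boot all_order all_algebra.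
From mathcomp Require Import all_classical all_reals all_analysis.
Set Implicit Arguments. Unset Strict Implicit. Unset Printing Implicit Defensive.
Import Order.TTheory GRing.Theory Num.Theory.
Local Open Scope classical_set_scope.
Local Open Scope ring_scope.

Definition SO3 (R : realType) : set 'M[R]_3 :=
  [set M | M^T *m M = 1%:M /\ \det M = 1].

(* S^3: unit quaternions w + x i + y j + z k, stored as (w,x,y,z) in 'rV_4. *)
Definition qw (R : realType) (q : 'rV[R]_4) : R := q ord0 (@Ordinal 4 0 isT).
Definition qx (R : realType) (q : 'rV[R]_4) : R := q ord0 (@Ordinal 4 1 isT).
Definition qy (R : realType) (q : 'rV[R]_4) : R := q ord0 (@Ordinal 4 2 isT).
Definition qz (R : realType) (q : 'rV[R]_4) : R := q ord0 (@Ordinal 4 3 isT).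

Definition S3 (R : realType) : set 'rV[R]_4 :=
  [set q | qw q ^+ 2 + qx q ^+ 2 + qy q ^+ 2 + qz q ^+ 2 = 1].

Definition RQ (R : realType) (q : 'rV[R]_4) : 'M[R]_3 :=
  let w := qw q in let x := qx q in let y := qy q in let z := qz q in
  \matrix_(i < 3, j < 3)
    nth 0 (nth [::]
      [:: [:: 1 - 2 * y ^+ 2 - 2 * z ^+ 2; 2 * (x * y - z * w); 2 * (x * z + y * w)];
          [:: 2 * (x * y + z * w); 1 - 2 * x ^+ 2 - 2 * z ^+ 2; 2 * (y * z - x * w)];
          [:: 2 * (x * z - y * w); 2 * (y * z + x * w); 1 - 2 * x ^+ 2 - 2 * y ^+ 2]]
      i) j.

From HB Require Import structures.
From mathcomp Require Import all_boot all_order all_algebra.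
From mathcomp Require Import all_classical all_reals all_analysis.
From mathcomp Require Import ring lra.
Set Implicit Arguments. Unset Strict Implicit. Unset Printing Implicit Defensive.
Import Order.TTheory GRing.Theory Num.Theory numFieldNormedType.Exports.
Local Open Scope classical_set_scope.
Local Open Scope ring_scope.

(* For a rotation M put k = 1 + tr M and
   v = (k, M21 - M12, M02 - M20, M10 - M01).  The orthogonality and cofactor
   relations of M give |v|^2 = 4k and RQhom v = |v|^2 M, where RQhom is the
   homogeneous quadratic form of R_Q; hence for k > 0 the unit quaternion
   v / |v| is a preimage of M that depends continuously on M.  Clamping the
   first coordinate to max(k, 1) makes the normalisation continuous on all
   matrices without changing it where k >= 1.  For e in {i, j, k} the same
   construction applied to M R_Q(e)^T, multiplied on the right by e, is again
   a preimage of M, since R_Q is multiplicative on S^3.  As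
   R_Q(1) + R_Q(i) + R_Q(j) + R_Q(k) = 0, the four numbers 1 + tr (M R_Q(e)^T)
   sum to 4, so at least one of them is >= 1. *)

Lemma ord3P (i : 'I_3) : [\/ i = 0, i = 1 | i = 2].
Proof.
by case: i => [[|[|[|//]]] ?]; [constructor 1 | constructor 2 | constructor 3]; apply/val_inj.
Qed.

Lemma sum_ord3 (V : nmodType) (F : 'I_3 -> V) : \sum_(k < 3) F k = F 0 + F 1 + F 2.
Proof.
rewrite !big_ord_recl big_ord0 addr0 addrA.
by congr (F _ + F _ + F _); apply/val_inj.
Qed.

Lemma lift3E : ((lift 0 0 = 1 :> 'I_3) * (lift 0 1 = 2 :> 'I_3) * (lift 1 0 = 0 :> 'I_3)
  * (lift 1 1 = 2 :> 'I_3) * (lift 2 0 = 0 :> 'I_3) * (lift 2 1 = 1 :> 'I_3))%type.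
Proof. by do !split; apply/val_inj. Qed.

Section Matrix3.
Variable R : comRingType.
Implicit Types A B : 'M[R]_3.

Lemma mulmx3E A B i j : (A *m B) i j = A i 0 * B 0 j + A i 1 * B 1 j + A i 2 * B 2 j.
Proof. by rewrite mxE sum_ord3. Qed.

Lemma mxtrace3E A : \tr A = A 0 0 + A 1 1 + A 2 2.
Proof. by rewrite /mxtrace sum_ord3. Qed.

Lemma det_mx22 (A : 'M[R]_2) : \det A = A 0 0 * A 1 1 - A 0 1 * A 1 0.
Proof.
rewrite (expand_det_row _ 0) !big_ord_recl big_ord0 /cofactor !det_mx11 !mxE /=.
rewrite expr0 expr1 !mul1r mulN1r addr0 mulrN.
by congr (A 0 _ * A _ _ - A 0 _ * A _ _); apply/val_inj.
Qed.

Lemma cofactor3E A i j : cofactor A i j = (-1) ^+ (i + j) *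
  (A (lift i 0) (lift j 0) * A (lift i 1) (lift j 1)
   - A (lift i 0) (lift j 1) * A (lift i 1) (lift j 0)).
Proof. by rewrite /cofactor det_mx22 !mxE. Qed.

Lemma det_mx33 A : \det A = A 0 0 * (A 1 1 * A 2 2 - A 1 2 * A 2 1)
  - A 0 1 * (A 1 0 * A 2 2 - A 1 2 * A 2 0) + A 0 2 * (A 1 0 * A 2 1 - A 1 1 * A 2 0).
Proof. by rewrite (expand_det_row _ 0) sum_ord3 !cofactor3E !lift3E; ring. Qed.

End Matrix3.

Lemma adj_orthogonal (R : comRingType) n (M : 'M[R]_n) :
  M^T *m M = 1%:M -> \adj M = \det M *: M^T.
Proof. by move=> MtM; rewrite -[\adj M]mul1mx -MtM -mulmxA mul_mx_adj mul_mx_scalar. Qed.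

Section SO3Group.
Variable R : realType.
Implicit Types A B : 'M[R]_3.

Lemma SO3_trmx A : SO3 A -> SO3 A^T.
Proof. by case=> AtA detA; split; [rewrite trmxK; apply: mulmx1C | rewrite det_tr]. Qed.

Lemma SO3_mulmx A B : SO3 A -> SO3 B -> SO3 (A *m B).
Proof.
move=> [AtA detA] [BtB detB]; split; last by rewrite det_mulmx detA detB mulr1.
by rewrite trmx_mul mulmxA -(mulmxA _ _ A) AtA mulmx1 BtB.
Qed.

End SO3Group.

Section ShepperdIdentities.
Variables (R : realType) (M : 'M[R]_3).
Hypothesis SO3M : SO3 M.

Let k := 1 + \tr M.
Let D := M^T *m M - 1%:M.
Let E := M - (\adj M)^T.

Let D0 : D = 0.
Proof. by case: SO3M => MtM _; rewrite /D MtM subrr. Qed.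

Let E0 : E = 0.
Proof. by case: SO3M => MtM detM; rewrite /E adj_orthogonal // detM scale1r trmxK subrr. Qed.

Let DE i j : D i j = M 0 i * M 0 j + M 1 i * M 1 j + M 2 i * M 2 j - (i == j)%:R.
Proof. by rewrite /D !mxE sum_ord3 !mxE. Qed.

Let EE i j : E i j = M i j - cofactor M i j.
Proof. by rewrite /E !mxE. Qed.

(* Each identity is an explicit combination, with polynomial coefficients, of
   entries of the defects [D] and [E], which vanish on SO(3). *)
Lemma SO3_axial_sqr :
  [/\ (M 2 1 - M 1 2) ^+ 2 = k * (1 + M 0 0 - M 1 1 - M 2 2),
      (M 0 2 - M 2 0) ^+ 2 = k * (1 - M 0 0 + M 1 1 - M 2 2) &
      (M 1 0 - M 0 1) ^+ 2 = k * (1 - M 0 0 - M 1 1 + M 2 2)].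
Proof.
split; apply/subr0_eq.
- transitivity (- D 0 0 + D 1 1 + D 2 2 - 2 * E 0 0 - M 0 1 * E 0 1 - M 0 2 * E 0 2
                + M 1 0 * E 1 0 + M 2 0 * E 2 0).
    by rewrite !(DE, EE, cofactor3E, lift3E) /k mxtrace3E /=; ring.
  by rewrite D0 E0 !mxE; ring.
- transitivity (- D 1 1 + D 2 2 + D 0 0 - 2 * E 1 1 - M 1 2 * E 1 2 - M 1 0 * E 1 0
                + M 2 1 * E 2 1 + M 0 1 * E 0 1).
    by rewrite !(DE, EE, cofactor3E, lift3E) /k mxtrace3E /=; ring.
  by rewrite D0 E0 !mxE; ring.
- transitivity (- D 2 2 + D 0 0 + D 1 1 - 2 * E 2 2 - M 2 0 * E 2 0 - M 2 1 * E 2 1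
                + M 0 2 * E 0 2 + M 1 2 * E 1 2).
    by rewrite !(DE, EE, cofactor3E, lift3E) /k mxtrace3E /=; ring.
  by rewrite D0 E0 !mxE; ring.
Qed.

Lemma SO3_axial_mul :
  [/\ (M 2 1 - M 1 2) * (M 0 2 - M 2 0) = k * (M 0 1 + M 1 0),
      (M 2 1 - M 1 2) * (M 1 0 - M 0 1) = k * (M 0 2 + M 2 0) &
      (M 0 2 - M 2 0) * (M 1 0 - M 0 1) = k * (M 1 2 + M 2 1)].
Proof.
split; apply/subr0_eq.
- transitivity (- D 0 1 - M 1 0 * E 0 0 - (1 + M 1 1) * E 0 1 - M 1 2 * E 0 2 - E 1 0).
    by rewrite !(DE, EE, cofactor3E, lift3E) /k mxtrace3E /=; ring.
  by rewrite D0 E0 !mxE; ring.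
- transitivity (- D 2 0 - M 0 2 * E 2 2 - (1 + M 0 0) * E 2 0 - M 0 1 * E 2 1 - E 0 2).
    by rewrite !(DE, EE, cofactor3E, lift3E) /k mxtrace3E /=; ring.
  by rewrite D0 E0 !mxE; ring.
- transitivity (- D 1 2 - M 2 1 * E 1 1 - (1 + M 2 2) * E 1 2 - M 2 0 * E 1 0 - E 2 1).
    by rewrite !(DE, EE, cofactor3E, lift3E) /k mxtrace3E /=; ring.
  by rewrite D0 E0 !mxE; ring.
Qed.

End ShepperdIdentities.

Section Quaternion.
Variable R : realType.
Implicit Types (p q : 'rV[R]_4) (a b c d : R).

Definition quat a b c d : 'rV[R]_4 := \row_(j < 4) nth 0 [:: a; b; c; d] j.

Lemma qw_quat a b c d : qw (quat a b c d) = a. Proof. by rewrite /qw mxE. Qed.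
Lemma qx_quat a b c d : qx (quat a b c d) = b. Proof. by rewrite /qx mxE. Qed.
Lemma qy_quat a b c d : qy (quat a b c d) = c. Proof. by rewrite /qy mxE. Qed.
Lemma qz_quat a b c d : qz (quat a b c d) = d. Proof. by rewrite /qz mxE. Qed.
Definition quatE := (qw_quat, qx_quat, qy_quat, qz_quat).

Definition qnorm2 q := qw q ^+ 2 + qx q ^+ 2 + qy q ^+ 2 + qz q ^+ 2.

Definition RQhom q : 'M[R]_3 :=
  let w := qw q in let x := qx q in let y := qy q in let z := qz q in
  \matrix_(i < 3, j < 3)
    nth 0 (nth [::]
      [:: [:: w ^+ 2 + x ^+ 2 - y ^+ 2 - z ^+ 2; 2 * (x * y - z * w); 2 * (x * z + y * w)];
          [:: 2 * (x * y + z * w); w ^+ 2 - x ^+ 2 + y ^+ 2 - z ^+ 2; 2 * (y * z - x * w)];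
          [:: 2 * (x * z - y * w); 2 * (y * z + x * w); w ^+ 2 - x ^+ 2 - y ^+ 2 + z ^+ 2]]
      i) j.

Lemma RQE q : RQ q = (1 - qnorm2 q)%:M + RQhom q.
Proof.
apply/matrixP => i j; rewrite !mxE.
by case: (ord3P i) => ->; case: (ord3P j) => -> /=; rewrite /qnorm2; ring.
Qed.

Lemma RQ_RQhom q : S3 q -> RQ q = RQhom q.
Proof. by move=> q1; rewrite RQE [qnorm2 q]q1 subrr raddf0 add0r. Qed.

Lemma qnorm2Z a q : qnorm2 (a *: q) = a ^+ 2 * qnorm2 q.
Proof. by rewrite /qnorm2 /qw /qx /qy /qz !mxE; ring. Qed.

Lemma RQhomZ a q : RQhom (a *: q) = a ^+ 2 *: RQhom q.
Proof.
apply/matrixP => i j; rewrite !mxE /qw /qx /qy /qz !mxE.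
by case: (ord3P i) => ->; case: (ord3P j) => -> /=; ring.
Qed.

Definition qnormalize q := (Num.sqrt (qnorm2 q))^-1 *: q.

Lemma S3_qnormalize q : 0 < qnorm2 q -> S3 (qnormalize q).
Proof.
move=> q_gt0; rewrite /S3 /= -/(qnorm2 _) qnorm2Z exprVn sqr_sqrtr ?ltW //.
by rewrite mulVf ?gt_eqF.
Qed.

Lemma RQ_qnormalize q : 0 < qnorm2 q -> RQ (qnormalize q) = (qnorm2 q)^-1 *: RQhom q.
Proof.
move=> q_gt0; rewrite RQ_RQhom; last exact: S3_qnormalize.
by rewrite /qnormalize RQhomZ exprVn sqr_sqrtr // ltW.
Qed.

Definition qmul p q : 'rV[R]_4 :=
  quat (qw p * qw q - qx p * qx q - qy p * qy q - qz p * qz q)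
       (qw p * qx q + qx p * qw q + qy p * qz q - qz p * qy q)
       (qw p * qy q - qx p * qz q + qy p * qw q + qz p * qx q)
       (qw p * qz q + qx p * qy q - qy p * qx q + qz p * qw q).

Lemma qnorm2M p q : qnorm2 (qmul p q) = qnorm2 p * qnorm2 q.
Proof. by rewrite /qnorm2 !quatE; ring. Qed.

Lemma RQhomM p q : RQhom (qmul p q) = RQhom p *m RQhom q.
Proof.
apply/matrixP => i j; rewrite mulmx3E !mxE !quatE.
by case: (ord3P i) => ->; case: (ord3P j) => -> /=; ring.
Qed.

Lemma S3_qmul p q : S3 p -> S3 q -> S3 (qmul p q).
Proof. by move=> p1 q1; rewrite /S3 /= -/(qnorm2 _) qnorm2M [qnorm2 p]p1 [qnorm2 q]q1 mulr1. Qed.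

Lemma RQM p q : S3 p -> S3 q -> RQ (qmul p q) = RQ p *m RQ q.
Proof. by move=> p1 q1; rewrite !RQ_RQhom ?RQhomM //; exact: S3_qmul. Qed.

Definition qmulr q p := qmul p q.

Lemma qmulr_is_linear q : linear (qmulr q).
Proof.
move=> a p1 p2; apply/rowP => j; rewrite !mxE /qw /qx /qy /qz !mxE.
by case: j => [[|[|[|[|//]]]] ?] /=; ring.
Qed.

Lemma RQhom_orthogonal q : (RQhom q)^T *m RQhom q = (qnorm2 q ^+ 2)%:M.
Proof.
apply/matrixP => i j; rewrite mulmx3E !mxE.
by case: (ord3P i) => ->; case: (ord3P j) => -> /=; rewrite /qnorm2; ring.
Qed.

Lemma det_RQhom q : \det (RQhom q) = qnorm2 q ^+ 3.
Proof. by rewrite det_mx33 !mxE /= /qnorm2; ring. Qed.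

Lemma RQ_SO3 q : S3 q -> SO3 (RQ q).
Proof.
move=> q1; rewrite RQ_RQhom //; split.
  by rewrite RQhom_orthogonal [qnorm2 q]q1 expr1n.
by rewrite det_RQhom [qnorm2 q]q1 expr1n.
Qed.

Definition qone : 'rV[R]_4 := quat 1 0 0 0.
Definition qi : 'rV[R]_4 := quat 0 1 0 0.
Definition qj : 'rV[R]_4 := quat 0 0 1 0.
Definition qk : 'rV[R]_4 := quat 0 0 0 1.

Lemma S3_units : [/\ S3 qone, S3 qi, S3 qj & S3 qk].
Proof. by split; rewrite /S3 /= !quatE; ring. Qed.

Lemma sum_RQ_units : RQ qone + RQ qi + RQ qj + RQ qk = 0.
Proof.
apply/matrixP => i j; rewrite !mxE !quatE.
by case: (ord3P i) => ->; case: (ord3P j) => -> /=; ring.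
Qed.

End Quaternion.

HB.instance Definition _ (R : realType) (q : 'rV[R]_4) :=
  GRing.isLinear.Build R _ _ _ (qmulr q) (qmulr_is_linear q).

Arguments qone {R}. Arguments qi {R}. Arguments qj {R}. Arguments qk {R}.

Section Shepperd.
Variable R : realType.
Implicit Types (M : 'M[R]_3) (e : 'rV[R]_4).

Definition axial_quat (a : R) M := quat a (M 2 1 - M 1 2) (M 0 2 - M 2 0) (M 1 0 - M 0 1).

Lemma RQhom_axial_quat M : SO3 M ->
  RQhom (axial_quat (1 + \tr M) M) = qnorm2 (axial_quat (1 + \tr M) M) *: M.
Proof.
move=> SO3M; have [sq0 sq1 sq2] := SO3_axial_sqr SO3M.
have [m01 m02 m12] := SO3_axial_mul SO3M.
apply/matrixP => i j; rewrite !mxE /qnorm2 !quatE.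
case: (ord3P i) => ->; case: (ord3P j) => -> /=;
  by rewrite ?(sq0, sq1, sq2, m01, m02, m12) mxtrace3E; ring.
Qed.

Lemma qnorm2_axial_quat_gt0 a M : 1 <= a -> 0 < qnorm2 (axial_quat a M).
Proof.
move=> a1; rewrite /qnorm2 !quatE.
have := sqr_ge0 (M 2 1 - M 1 2); have := sqr_ge0 (M 0 2 - M 2 0).
have := sqr_ge0 (M 1 0 - M 0 1); nra.
Qed.

Definition shepperd_vec M := axial_quat (Num.max (1 + \tr M) 1) M.

Definition shepperd M := qnormalize (shepperd_vec M).

Lemma qnorm2_shepperd_vec_gt0 M : 0 < qnorm2 (shepperd_vec M).
Proof. by apply: qnorm2_axial_quat_gt0; rewrite le_max lexx orbT. Qed.

Lemma S3_shepperd M : S3 (shepperd M).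
Proof. exact/S3_qnormalize/qnorm2_shepperd_vec_gt0. Qed.

Lemma RQ_shepperd M : SO3 M -> 1 <= 1 + \tr M -> RQ (shepperd M) = M.
Proof.
move=> SO3M k1; rewrite RQ_qnormalize ?qnorm2_shepperd_vec_gt0 // /shepperd_vec max_l //.
by rewrite RQhom_axial_quat // scalerA mulVf ?scale1r // gt_eqF ?qnorm2_axial_quat_gt0.
Qed.

Definition shepperd_at e M := qmul (shepperd (M *m (RQ e)^T)) e.

Lemma S3_shepperd_at e M : S3 e -> S3 (shepperd_at e M).
Proof. by move=> e1; apply: S3_qmul => //; exact: S3_shepperd. Qed.

Lemma RQ_shepperd_at e M : S3 e -> SO3 M ->
  1 <= 1 + \tr (M *m (RQ e)^T) -> RQ (shepperd_at e M) = M.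
Proof.
move=> e1 SO3M k1; have SO3e := RQ_SO3 e1.
rewrite /shepperd_at RQM //; last exact: S3_shepperd.
rewrite RQ_shepperd //; last exact/SO3_mulmx/SO3_trmx.
by rewrite -mulmxA; case: SO3e => -> _; rewrite mulmx1.
Qed.

Lemma shepperd_cover M : let t e := 1 + \tr (M *m (RQ e)^T) in
  1 <= t qone \/ 1 <= t qi \/ 1 <= t qj \/ 1 <= t qk.
Proof.
move=> t; have : \tr (M *m (RQ qone)^T) + \tr (M *m (RQ qi)^T)
    + \tr (M *m (RQ qj)^T) + \tr (M *m (RQ qk)^T) = 0.
  by rewrite -!mxtraceD -!mulmxDr -!linearD sum_RQ_units linear0 mulmx0 mxtrace0.
rewrite /t; lra.
Qed.

End Shepperd.

Section Continuity.
Variable R : realType.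

Lemma mx_continuous (T : topologicalType) m n (f : T -> 'M[R]_(m, n)) x :
  (forall i j, {for x, continuous (fun y => f y i j)}) -> {for x, continuous f}.
Proof.
move=> fc; rewrite (_ : f = fun y => \sum_i \sum_j f y i j *: delta_mx i j).
  apply: (@cvg_big _ _ +%R 0 xpredT add_continuous) => i _.
  apply: (@cvg_big _ _ +%R 0 xpredT add_continuous) => j _.
  exact: continuousZr_tmp.
by apply: funext => y; rewrite -matrix_sum_delta.
Qed.

Lemma mulmxr_continuous m n p (A : 'M[R]_(n, p)) :
  continuous (fun M : 'M[R]_(m, n) => M *m A).
Proof.
move=> M; apply: mx_continuous => i j.
rewrite (_ : (fun N => _) = fun N : 'M[R]_(m, n) => \sum_k N i k * A k j).
  apply: (@cvg_big _ _ +%R 0 xpredT add_continuous _ _ _ _ _ (nbhs_filter M)) => k _.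
  by apply: continuousM; [exact: coord_continuous | exact: cst_continuous].
by apply: funext => N; rewrite mxE.
Qed.

Lemma linear_rV_continuous m n (f : {linear 'rV[R]_m -> 'rV[R]_n}) : continuous f.
Proof.
move=> u; rewrite (_ : (f : _ -> _) = fun v => v *m lin1_mx f); first exact: mulmxr_continuous.
by apply: funext => v; rewrite mul_rV_lin1.
Qed.

Lemma mxtrace_continuous n : continuous (@mxtrace R n).
Proof.
apply: (@continuous_big _ _ +%R 0 xpredT add_continuous) => i _.
exact: coord_continuous.
Qed.

Lemma quat_continuous (T : topologicalType) (a b c d : T -> R) x :
  {for x, continuous a} -> {for x, continuous b} ->
  {for x, continuous c} -> {for x, continuous d} ->
  {for x, continuous (fun y => quat (a y) (b y) (c y) (d y))}.
Proof.
move=> ca cb cc cd; apply: mx_continuous => i j.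
rewrite (_ : (fun y => _) = fun y => nth 0 [:: a y; b y; c y; d y] j).
  by case: j => [[|[|[|[|//]]]] ?].
by apply: funext => y; rewrite mxE.
Qed.

Section QuatFunctions.
Variables (T : topologicalType) (f : T -> 'rV[R]_4) (x : T).
Hypothesis fx : {for x, continuous f}.

Let coord_fcontinuous i j : {for x, continuous (fun y => f y i j)}.
Proof. exact (continuous_comp fx (@coord_continuous R 1 4 i j _)). Qed.

Let sqr_fcontinuous i j : {for x, continuous (fun y => f y i j ^+ 2)}.
Proof. exact (continuous_comp (@coord_fcontinuous i j) (@exprn_continuous R 2 _)). Qed.

Lemma qnorm2_continuous : {for x, continuous (fun y => qnorm2 (f y))}.
Proof. by rewrite /qnorm2; repeat apply: continuousD; exact: sqr_fcontinuous. Qed.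

Lemma qnormalize_continuous : 0 < qnorm2 (f x) -> {for x, continuous (fun y => qnormalize (f y))}.
Proof.
move=> fx_gt0; apply: continuousZ => //.
apply: continuousV; first by rewrite sqrtr_eq0 -ltNge.
exact (continuous_comp qnorm2_continuous (@sqrt_continuous R _)).
Qed.

End QuatFunctions.

Lemma shepperd_vec_continuous : continuous (@shepperd_vec R).
Proof.
(* [quat_continuous] only unifies with the unfolded function. *)
move=> M; change {for M, continuous (fun N : 'M[R]_3 => axial_quat (Num.max (1 + \tr N) 1) N)}.
apply: quat_continuous; last 3 first.
- by apply: continuousB; exact: coord_continuous.
- by apply: continuousB; exact: coord_continuous.
- by apply: continuousB; exact: coord_continuous.
apply: continuous_max; last exact: cst_continuous.
by apply: continuousD; [exact: cst_continuous | exact: mxtrace_continuous].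
Qed.

Lemma shepperd_continuous : continuous (@shepperd R).
Proof.
move=> M.
exact (qnormalize_continuous (@shepperd_vec_continuous M) (qnorm2_shepperd_vec_gt0 M)).
Qed.

Lemma shepperd_at_continuous (e : 'rV[R]_4) : continuous (shepperd_at e).
Proof.
move=> M; exact (continuous_comp
  (continuous_comp (@mulmxr_continuous 3 3 3 (RQ e)^T M) (@shepperd_continuous _))
  (@linear_rV_continuous 4 4 (qmulr e) _)).
Qed.

End Continuity.

Theorem theorem6 (R : realType) :
  exists f1 f2 f3 f4 : 'M[R]_3 -> 'rV[R]_4,
    [/\ {within (@SO3 R), continuous f1}, {within (@SO3 R), continuous f2},
        {within (@SO3 R), continuous f3} & {within (@SO3 R), continuous f4}] /\
    (forall M, (@SO3 R) M -> [/\ S3 (f1 M), S3 (f2 M), S3 (f3 M) & S3 (f4 M)]) /\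
    (forall M, (@SO3 R) M ->
       RQ (f1 M) = M \/ RQ (f2 M) = M \/ RQ (f3 M) = M \/ RQ (f4 M) = M).
Proof.
have [S3one S3i S3j S3k] := @S3_units R.
exists (shepperd_at qone), (shepperd_at qi), (shepperd_at qj), (shepperd_at qk); split; [|split].
- by split; apply: continuous_subspaceT; exact: shepperd_at_continuous.
- by move=> M _; split; exact: S3_shepperd_at.
- move=> M SO3M; case: (shepperd_cover M) => [|[|[|]]] tr1.
  + by left; exact: RQ_shepperd_at.
  + by right; left; exact: RQ_shepperd_at.
  + by right; right; left; exact: RQ_shepperd_at.
  + by right; right; right; exact: RQ_shepperd_at.
Qed.
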